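(* Let $(X,\triangleright)$ be a topological quandle and let $(C_*(X),\partial_* )$ be its singular quandle chain groups and boundary maps as described in the context. Then for every $n$ the composition $C_n(X)\xrightarrow{\partial_n} C_{n-1}(X)\xrightarrow{\partial_{n-1}} C_{n-2}(X)$ is zero.
   Context: A quandle is a set $X$ with a binary operation $\triangleright$ such that $x\triangleright x=x$ for all $x$, each map $\beta_y(x)=x\triangleright y$ is bijective, and $(x\triangleright y)\triangleright z=(x\triangleright z)\triangleright(y\triangleright z)$. A topological quandle is a topological space $X$ with a quandle operation $\triangleright:X\times X\to X$ that is continuous and such that every $\beta_y$ is a homeomorphism. Let $\Delta^n$ be the standard $n$-simplex with vertices $e_0,\dots,e_n$ (and let $\bar e_0,\dots,\bar e_{n-1}$ be the vertices of $\Delta^{n-1}$). A singular $n$-simplex is a continuous map $\sigma:\Delta^n\to X$; we write $\sigma=\sigma_{[x_1,\dots,x_{n+1}]}$ to indicate $x_i=\sigma(e_{i-1})$. Singular $n$-simplices form a quandle under the pointwise operation $(\sigma\triangleright\tau)(t)=\sigma(t)\triangleright\tau(t)$. $C_n(X)$ is the free abelian group on all singular $n$-simplices. For $2\le i\le n+1$, let $d_i\sigma$ be $\sigma$ composed with the affine map $\Delta^{n-1}\to\Delta^n$ sending $\bar e_j\mapsto e_j$ for $j\le i-2$ and $\bar e_j\mapsto e_{j+1}$ for $j\ge i-1$ (the face omitting the $i$-th vertex $x_i$), and let $s_i\sigma=\sigma\circ\iota_i$ where $\iota_i:\Delta^{n-1}\to\Delta^n$ is the affine map $\sum_{j=0}^{n-1}t_j\bar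 e_j\mapsto(\sum_{k=0}^{i-2}t_k)e_{i-1}+\sum_{j=i-1}^{n-1}t_je_{j+1}$ (so $s_i\sigma$ has vertices $x_i,\dots,x_i$ ($i-1$ times), $x_{i+1},\dots,x_{n+1}$). The boundary $\partial_n:C_n(X)\to C_{n-1}(X)$ is defined on generators by $\partial_n\sigma=\sum_{i=2}^{n+1}(-1)^i\big(d_i\sigma-d_i\sigma\triangleright s_i\sigma\big)$ and extended linearly; $\partial_0=0$. *)

From HB Require Import structures.
From mathcomp Require Import all_boot all_order all_algebra.
From mathcomp Require Import all_classical all_reals all_analysis.
From mathcomp Require Import Rstruct Rstruct_topology.
From mathcomp.multinomials Require Import freeg.
Set Implicit Arguments. Unset Strict Implicit. Unset Printing Implicit Defensive.
Import Order.TTheory GRing.Theory Num.Theory.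
Local Open Scope classical_set_scope.
Local Open Scope ring_scope.

Notation RR := Rdefinitions.R.

Definition topological_quandle (X : topologicalType) (op : X -> X -> X) : Prop :=
  [/\ (forall x, op x x = x),
      (forall y, bijective (fun x => op x y)),
      (forall x y z, op (op x y) z = op (op x z) (op y z)),
      continuous (fun p : X * X => op p.1 p.2) &
      (forall y, exists g : X -> X,
         [/\ cancel (fun x => op x y) g, cancel g (fun x => op x y),
             continuous (fun x => op x y) & continuous g])].

(* The standard n-simplex Delta^n in R^(n+1) (row vectors), vertices
   e_0, ..., e_n; as a topological space it carries the subspace topology
   (the initial topology of the inclusion, see subtype_topology.v). *)
Definition stdsimplex (n : nat) : set 'rV[RR]_n.+1 :=
  [set t | (forall i, 0 <= t 0 i) /\ \sum_i t 0 i = 1].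

Arguments stdsimplex n : clear implicits.
Notation Simplex n := (@set_type _ (stdsimplex n)).

(* The affine map Delta^m -> Delta^n sending the vertex e_j to e_(v j). *)
Definition affine_pt m n (v : 'I_m.+1 -> 'I_n.+1) (t : 'rV[RR]_m.+1)
  : 'rV[RR]_n.+1 := \row_k \sum_(j | v j == k) t 0 j.

Lemma affine_ptP m n (v : 'I_m.+1 -> 'I_n.+1) (t : Simplex m) :
  affine_pt v (val t) \in stdsimplex n.
Proof.
case: t => t /= /set_mem [t0 t1]; apply/mem_set; split.
  by move=> i; rewrite mxE; apply: sumr_ge0 => j _; exact: t0.
under eq_bigr do rewrite mxE.
by rewrite -t1 (partition_big v xpredT) //.
Qed.

Definition affine m n (v : 'I_m.+1 -> 'I_n.+1) : Simplex m -> Simplex n :=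
  fun t => exist _ (affine_pt v (val t)) (affine_ptP v t).

(* For 1 <= k <= n+1 (k = i-1, where i is the 1-based index of the vertex
   x_i = sigma(e_(i-1)) in the paper):
   face map: bar e_j |-> e_j (j < k), e_(j+1) (j >= k);
   degeneracy iota: bar e_j |-> e_k (j < k), e_(j+1) (j >= k). *)
Definition face_v n (k : 'I_n.+2) : 'I_n.+1 -> 'I_n.+2 := fintype.lift k.
Definition degen_v n (k : 'I_n.+2) : 'I_n.+1 -> 'I_n.+2 :=
  fun j => if (j < k)%N then k else fintype.lift k j.

(* Chains are elements
   of the free abelian group on maps Delta^n -> X whose support consists of
   continuous maps (this subgroup is the free abelian group C_n(X)). *)
Definition chains (X : topologicalType) (n : nat) := {freeg (Simplex n -> X) / int}.

Definition is_singular_chain (X : topologicalType) n (c : chains X n) : Prop :=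
  forall s, s \in dom c -> continuous s.

Definition qop (X : topologicalType) (op : X -> X -> X) n
  (s t : Simplex n -> X) : Simplex n -> X := fun p => op (s p) (t p).

(* d_i sigma and s_i sigma for i = k+1. *)
Definition dface (X : topologicalType) n (k : 'I_n.+2) (s : Simplex n.+1 -> X)
  : Simplex n -> X := s \o affine (face_v k).
Definition sdeg (X : topologicalType) n (k : 'I_n.+2) (s : Simplex n.+1 -> X)
  : Simplex n -> X := s \o affine (degen_v k).

(* boundary of a generator sigma of C_(n+1):
   sum_(i=2)^(n+2) (-1)^i (d_i sigma - d_i sigma |> s_i sigma), with i = k+1. *)
Definition bd_gen (X : topologicalType) (op : X -> X -> X) n
  (s : Simplex n.+1 -> X) : chains X n :=
  \sum_(k : 'I_n.+2 | (0 < k)%N)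
     ((-1) ^+ k.+1 : int) *: (<< dface k s >> - << qop op (dface k s) (sdeg k s) >>).

Definition bd (X : topologicalType) (op : X -> X -> X) (n : nat)
  : chains X n -> chains X n.-1 :=
  match n return chains X n -> chains X n.-1 with
  | 0 => fun _ => 0
  | m.+1 => fun c => fglift (@bd_gen X op m) c
  end.
Arguments bd {X} op n _.

From HB Require Import structures.
From mathcomp Require Import all_boot all_order all_algebra.
From mathcomp Require Import all_classical all_reals all_analysis.
From mathcomp.multinomials Require Import freeg.
From mathcomp Require Import Rstruct zify.
Set Implicit Arguments. Unset Strict Implicit. Unset Printing Implicit Defensive.
Import GRing.Theory.
Local Open Scope ring_scope.

(* Expanding the boundary twice writes [bd (bd s)] as a sum over pairs (k, j)
   of face indices, where the (k, j) term is the j-th face term of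
   [d_k s - d_k s |> s_k s].  The involution (k, j) |-> (j, k - 1) for j < k,
   (j + 1, k) otherwise, flips the sign (-1)^(k+j), and by the simplicial
   identities between faces and the degeneracies [s_k] it maps each term to
   itself with the two middle summands exchanged.  With a = d_j d_k s,
   u = s_j d_k s and w = d_j s_k s, the last summands of the two terms are
   (a |> w) |> (u |> w) and (a |> u) |> (w |> w), which agree by
   self-distributivity and idempotency.  So the terms cancel in pairs. *)

Lemma affine_comp m n l (v : 'I_n.+1 -> 'I_l.+1) (w : 'I_m.+1 -> 'I_n.+1)
    (t : Simplex m) :
  affine v (affine w t) = affine (v \o w) t.
Proof.
apply: val_inj => /=; apply/rowP => i; rewrite !mxE.
under eq_bigr do rewrite mxE.
apply/esym; rewrite (partition_big w (fun j => v j == i)) /=; last by move=> q /eqP ->.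
apply: eq_bigr => j vj; apply: eq_bigl => q.
by case: (eqVneq (w q) j) => [->|]; rewrite ?andbF ?andbT ?vj.
Qed.

Lemma comp_affine (X : Type) m n l (s : Simplex l -> X)
    (v : 'I_n.+1 -> 'I_l.+1) (w : 'I_m.+1 -> 'I_n.+1) :
  (s \o affine v) \o affine w = s \o affine (v \o w).
Proof. by apply: funext => t /=; rewrite affine_comp. Qed.

Lemma val_degen_v n (k : 'I_n.+2) i : degen_v k i = maxn k i.+1 :> nat.
Proof. by rewrite /degen_v; case: ltnP => ki /=; rewrite /bump; lia. Qed.

(* Vertex maps compose contravariantly:
   [dface j (dface k s) = s \o affine (face_v k \o face_v j)]. *)
Ltac vertex_maps_eq :=
  apply: funext => i; apply: val_inj; rewrite /= ?val_degen_v /= /bump; lia.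

Section CosimplicialIdentities.
Variables (n : nat) (k j' : 'I_n.+3) (j k' : 'I_n.+2).
Hypotheses (ltjk : (j < k)%N) (j'E : j' = j :> nat) (k'E : k' = k.-1 :> nat).

Lemma face_faceC : face_v k \o face_v j = face_v j' \o face_v k'.
Proof. vertex_maps_eq. Qed.

Lemma face_degenC : face_v k \o degen_v j = degen_v j' \o face_v k'.
Proof. vertex_maps_eq. Qed.

Lemma degen_faceC : degen_v k \o face_v j = face_v j' \o degen_v k'.
Proof. vertex_maps_eq. Qed.

End CosimplicialIdentities.

Lemma degen_face_degen n (k : 'I_n.+3) (j : 'I_n.+2) :
  (j < k)%N -> degen_v k \o face_v j = degen_v k \o degen_v j.
Proof. move=> ltjk; vertex_maps_eq. Qed.

Lemma face_degen_degen n (j : 'I_n.+3) (k : 'I_n.+2) :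
  (j <= k)%N -> face_v j \o degen_v k = degen_v j \o degen_v k.
Proof. move=> lejk; vertex_maps_eq. Qed.

HB.instance Definition _ (K : choiceType) (M : lmodType int) (g : K -> M) :=
  GRing.isAdditive.Build {freeg K / int} M (fglift g) (lift_is_additive g).

Lemma fglift_is_scalable (K : choiceType) (M : lmodType int) (g : K -> M) :
  scalable (fglift g).
Proof. by move=> k D; rewrite -[in LHS](intz k) scaler_int raddfMz -scaler_int intz. Qed.

HB.instance Definition _ (K : choiceType) (M : lmodType int) (g : K -> M) :=
  GRing.isScalable.Build int {freeg K / int} M *:%R (fglift g) (fglift_is_scalable g).

Lemma fgliftU1 (K : choiceType) (M : lmodType int) (g : K -> M) x :
  fglift g << x >> = g x.
Proof. by rewrite liftU scale1r. Qed.

Lemma sumr_opp_involution (V : zmodType) (I : finType) (P Q : pred I)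
    (phi : I -> I) (F : I -> V) :
  involutive phi -> (forall i, P i -> P (phi i)) ->
  (forall i, P i -> Q (phi i) = ~~ Q i) ->
  (forall i, P i -> Q i -> F (phi i) = - F i) ->
  \sum_(i | P i) F i = 0.
Proof.
move=> phiK Pphi Qphi Fphi.
have PphiE i : P (phi i) = P i.
  by apply/idP/idP => [/Pphi|]; rewrite ?phiK //; apply: Pphi.
rewrite (bigID Q) /= [X in _ + X](reindex_inj (inv_inj phiK)) /=.
rewrite -[X in _ + X]opprK -sumrN.
rewrite [X in _ - X](eq_big (fun i => P i && Q i) F) ?subrr // => i.
  by rewrite PphiE; case Pi: (P i); rewrite //= Qphi // negbK.
rewrite PphiE => /andP[Pi]; rewrite Qphi // negbK => Qi.
by rewrite Fphi ?opprK.
Qed.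

Definition face_pair_flip p (x : 'I_p.+3 * 'I_p.+2) : 'I_p.+3 * 'I_p.+2 :=
  if (x.2 < x.1)%N then (inord x.2, inord x.1.-1) else (inord x.2.+1, inord x.1).

Lemma face_pair_flipK p : involutive (@face_pair_flip p).
Proof.
move=> [k j]; have ltj := ltn_ord j; have ltk := ltn_ord k.
rewrite /face_pair_flip /=; case: (ltnP j k) => jk /=; rewrite !inordK; try lia;
  case: ifP => h; try lia; by congr pair; apply: val_inj; rewrite /= inordK; lia.
Qed.

Lemma face_pair_flip_lt p (x : 'I_p.+3 * 'I_p.+2) :
  ((face_pair_flip x).2 < (face_pair_flip x).1)%N = ~~ (x.2 < x.1)%N.
Proof.
case: x => k j; have ltj := ltn_ord j; have ltk := ltn_ord k.
rewrite /face_pair_flip /=; case: (ltnP j k) => jk /=; rewrite !inordK; lia.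
Qed.

Lemma face_pair_flip_gt0 p (x : 'I_p.+3 * 'I_p.+2) :
  (0 < x.1)%N && (0 < x.2)%N ->
  (0 < (face_pair_flip x).1)%N && (0 < (face_pair_flip x).2)%N.
Proof.
case: x => k j; have ltj := ltn_ord j; have ltk := ltn_ord k.
rewrite /face_pair_flip /=; case: (ltnP j k) => jk /=; rewrite !inordK; lia.
Qed.

Section QuandleBoundary.
Variables (X : topologicalType) (op : X -> X -> X).
Hypotheses (opxx : forall x, op x x = x)
  (op_distr : forall x y z, op (op x y) z = op (op x z) (op y z)).

Lemma qopxx n (a : Simplex n -> X) : qop op a a = a.
Proof. by apply: funext => t; rewrite /qop opxx. Qed.

Lemma qop_distr n (a b c : Simplex n -> X) :
  qop op (qop op a b) c = qop op (qop op a c) (qop op b c).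
Proof. by apply: funext => t; rewrite /qop op_distr. Qed.

Lemma dface_qop n (k : 'I_n.+2) (a b : Simplex n.+1 -> X) :
  dface k (qop op a b) = qop op (dface k a) (dface k b).
Proof. by []. Qed.

Lemma sdeg_qop n (k : 'I_n.+2) (a b : Simplex n.+1 -> X) :
  sdeg k (qop op a b) = qop op (sdeg k a) (sdeg k b).
Proof. by []. Qed.

Definition face_term n (k : 'I_n.+2) (s : Simplex n.+1 -> X) : chains X n :=
  << dface k s >> - << qop op (dface k s) (sdeg k s) >>.

Definition face_face_term p (k : 'I_p.+3) (j : 'I_p.+2) (s : Simplex p.+2 -> X)
    : chains X p :=
  face_term j (dface k s) - face_term j (qop op (dface k s) (sdeg k s)).

Lemma bd_gen_bd_genE p (s : Simplex p.+2 -> X) :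
  fglift (@bd_gen X op p) (bd_gen op s) =
  \sum_(x : 'I_p.+3 * 'I_p.+2 | (0 < x.1)%N && (0 < x.2)%N)
    ((-1) ^+ x.1.+1 * (-1) ^+ x.2.+1) *: face_face_term x.1 x.2 s.
Proof.
transitivity (\sum_(k : 'I_p.+3 | (0 < k)%N) \sum_(j : 'I_p.+2 | (0 < j)%N)
    ((-1) ^+ k.+1 * (-1) ^+ j.+1) *: face_face_term k j s); last by rewrite pair_big_dep.
rewrite linear_sum; apply: eq_bigr => k _.
rewrite linearZ linearB /= !fgliftU1 -sumrB scaler_sumr.
by apply: eq_bigr => j _; rewrite -scalerBr scalerA.
Qed.

Lemma face_face_term_flip p (k : 'I_p.+3) (j : 'I_p.+2) (s : Simplex p.+2 -> X) :
  (j < k)%N -> face_face_term (inord j) (inord k.-1) s = face_face_term k j s.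
Proof.
move=> ltjk; have ltj := ltn_ord j; have ltk := ltn_ord k.
have j'E : (inord j : 'I_p.+3) = j :> nat by rewrite inordK; lia.
have k'E : (inord k.-1 : 'I_p.+2) = k.-1 :> nat by rewrite inordK; lia.
rewrite /face_face_term /face_term !dface_qop !sdeg_qop /dface /sdeg !comp_affine.
rewrite -(face_faceC ltjk j'E k'E) -(face_degenC ltjk j'E k'E).
have lejk : ((inord j : 'I_p.+3) <= (inord k.-1 : 'I_p.+2))%N by rewrite j'E k'E; lia.
rewrite -(face_degen_degen lejk) -(degen_faceC ltjk j'E k'E) -(degen_face_degen ltjk).
rewrite qopxx -qop_distr !opprB addrACA [RHS]addrACA; congr (_ + _); exact: addrC.
Qed.

Lemma bd_gen_bd_gen p (s : Simplex p.+2 -> X) :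
  fglift (@bd_gen X op p) (bd_gen op s) = 0.
Proof.
rewrite bd_gen_bd_genE.
apply: (@sumr_opp_involution _ _ _ (fun x : 'I_p.+3 * 'I_p.+2 => x.2 < x.1)%N
         (@face_pair_flip p)).
- exact: face_pair_flipK.
- exact: face_pair_flip_gt0.
- by move=> x _; exact: face_pair_flip_lt.
move=> [k j] /= /andP[k_gt0 j_gt0] ltjk; have ltk := ltn_ord k.
rewrite /face_pair_flip /= ltjk face_face_term_flip // !inordK; try lia.
by rewrite prednK // -scaleNr mulrC [in RHS]exprS mulN1r mulNr opprK.
Qed.
End QuandleBoundary.

Theorem mainTheorem1 (X : topologicalType) (op : X -> X -> X)
  (hX : topological_quandle op) (n : nat) (c : chains X n) :
  is_singular_chain c -> bd op n.-1 (bd op n c) = 0.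
Proof.
move=> _; case: hX => opxx _ op_distr _ _.
case: n c => [|[|p]] c //=.
rewrite -[c]freeg_sumE !linear_sum big1 // => x _.
by rewrite /= liftU linearZ /= bd_gen_bd_gen // scaler0.
Qed.
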